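(* Let $k\ge3$ and let $G=(V,E)$ be a $k$-uniform hyperstar of size $d\ge2$ with $V=[n]$ and heart the vertex $1$, and let $\mathcal L$ be its Laplacian tensor. Suppose $(\lambda,\mathbf x)$ is an H-eigenpair of $\mathcal L$ with $\lambda\neq1$. Then: (i) If $i,j\ge2$ lie in a common edge, then $x_i=x_j$ when $k$ is odd and $|x_i|=|x_j|$ when $k$ is even. (ii) If $i,j\ge2$ and $x_i\neq0$, $x_j\neq0$, then $x_i=x_j$ when $k$ is odd and $|x_i|=|x_j|$ when $k$ is even.
   Context: A $k$-uniform hyperstar of size $d$ is a hypergraph whose vertex set is a disjoint union $V=V_0\cup V_1\cup\cdots\cup V_d$ with $|V_0|=1$, $|V_1|=\cdots=|V_d|=k-1$, and edge set $\{V_0\cup V_i: i\in[d]\}$; the vertex in $V_0$ is the heart. For a $k$-uniform hypergraph with $d_i$ the number of edges containing $i$, the Laplacian tensor $\mathcal L=\mathcal D-\mathcal A$ ($\mathcal D$ diagonal with entries $d_i$, $\mathcal A$ with entries $\frac1{(k-1)!}$ at index tuples forming an edge and $0$ otherwise) satisfies $(\mathcal L\mathbf x^{k-1})_i=d_ix_i^{k-1}-\sum_{e\ni i}\prod_{s\in e\setminus\{i\}}x_s$. An H-eigenpair $(\lambda,\mathbf x)$ consists of $\lambda\in\mathbb R$ and $\mathbf x\in\mathbb R^n\setminus\{0\}$ with $(\mathcal L\mathbf x^{k-1})_i=\lambda x_i^{k-1}$ for all $i$. *)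

From HB Require Import structures.
From mathcomp Require Import all_boot all_order all_algebra.
From mathcomp Require Import reals.
Set Implicit Arguments. Unset Strict Implicit. Unset Printing Implicit Defensive.
Import Order.TTheory GRing.Theory Num.Theory.
Local Open Scope ring_scope.

Definition is_hyperstar (n k d : nat) (E : {set {set 'I_n}}) (h : 'I_n) : Prop :=
  exists B : 'I_d -> {set 'I_n},
    [/\ forall i, #|B i| = k.-1,
        forall i, h \notin B i,
        forall i j, i != j -> [disjoint B i & B j],
        forall v : 'I_n, v != h -> exists i, v \in B i &
        E = [set h |: B i | i : 'I_d]].

Definition hdeg (n : nat) (E : {set {set 'I_n}}) (i : 'I_n) : nat :=
  #|[set e in E | i \in e]|.

(* An order-k, dimension-n real tensor: a function of index sequences
   (only entries on sequences of length k are relevant). *)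
Definition tensor (R : Type) (n : nat) := seq 'I_n -> R.

Definition adj_tensor (R : realType) (n k : nat) (E : {set {set 'I_n}})
  : tensor R n := fun s =>
  if [&& size s == k, uniq s & [set u in s] \in E]
  then ((k.-1)`!%:R)^-1 else 0.

Definition deg_tensor (R : realType) (n k : nat) (E : {set {set 'I_n}})
  : tensor R n := fun s =>
  match s with
  | i :: _ => if (size s == k) && all (fun j => j == i) s
              then (hdeg E i)%:R else 0
  | [::] => 0
  end.

Definition lap_tensor (R : realType) (n k : nat) (E : {set {set 'I_n}})
  : tensor R n := fun s => deg_tensor R k E s - adj_tensor R k E s.

Definition tmul (R : realType) (n k : nat) (T : tensor R n) (x : 'I_n -> R)
  (i : 'I_n) : R :=
  \sum_(t : (k.-1).-tuple 'I_n) T (i :: tval t) * \prod_(s <- tval t) x s.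

Definition H_eigenpair (R : realType) (n k : nat) (T : tensor R n)
  (lam : R) (x : 'I_n -> R) : Prop :=
  (exists i, x i != 0) /\ forall i, tmul k T x i = lam * x i ^+ k.-1.

From HB Require Import structures.
From mathcomp Require Import all_boot all_order all_algebra.
From mathcomp Require Import reals.
Import Order.TTheory GRing.Theory Num.Theory.

Set Implicit Arguments.
Unset Strict Implicit.
Unset Printing Implicit Defensive.

Local Open Scope ring_scope.

(* Every vertex [i] other than the heart is pendant, lying only in its edge
   [e], so the eigenequation at [i] reads
   [(1 - lam) x_i^(k-1) = prod_(s in e :\ i) x_s].  Multiplying by [x_i]
   makes the right-hand side independent of [i]: [x_i^k] is constant on each
   edge, which gives (i).  If moreover [x_i <> 0], then by (i) every factor of
   the product other than [x_heart] equals [x_i] up to sign (exactly, for odd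
   [k]), so the equation collapses to [(1 - lam) x_i = x_heart] up to sign;
   as [lam <> 1], [x_i] is determined by the heart alone, which gives (ii). *)

(* The invariant of [y] that [y ^+ k] determines: [y] for odd [k], [`|y|]
   for even [k]. *)
Definition parity_norm (R : numDomainType) (k : nat) (y : R) : R :=
  if odd k then y else `|y|.

Section ParityNorm.
Variables (R : numDomainType) (k : nat).

Lemma parity_normM (y z : R) :
  parity_norm k (y * z) = parity_norm k y * parity_norm k z.
Proof. by rewrite /parity_norm; case: ifP; rewrite ?normrM. Qed.

Lemma parity_normX (y : R) m : parity_norm k (y ^+ m) = parity_norm k y ^+ m.
Proof. by rewrite /parity_norm; case: ifP; rewrite ?normrX. Qed.

Lemma parity_norm_prod (I : Type) (r : seq I) (P : pred I) (F : I -> R) :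
  parity_norm k (\prod_(i <- r | P i) F i) = \prod_(i <- r | P i) parity_norm k (F i).
Proof. by rewrite /parity_norm; case: ifP; rewrite ?normr_prod. Qed.

Lemma parity_norm_eq0 (y : R) : (parity_norm k y == 0) = (y == 0).
Proof. by rewrite /parity_norm; case: ifP; rewrite ?normr_eq0. Qed.

Lemma parity_normP (y z : R) : parity_norm k y = parity_norm k z ->
  (odd k -> y = z) /\ (~~ odd k -> `|y| = `|z|).
Proof. by rewrite /parity_norm; case: ifP. Qed.

End ParityNorm.

Lemma eqrXn_norm (R : numDomainType) m (y z : R) :
  (0 < m)%N -> y ^+ m = z ^+ m -> `|y| = `|z|.
Proof.
move=> m_gt0 yz; apply/eqP; rewrite -(eqrXn2 m_gt0) ?normr_ge0 //.
by rewrite -!normrX yz.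
Qed.

Lemma eqrXn_odd (R : realDomainType) m (y z : R) :
  odd m -> y ^+ m = z ^+ m -> y = z.
Proof.
move=> m_odd yz; have yz_norm := eqrXn_norm (odd_gt0 m_odd) yz.
have [y_ge0|y_lt0] := lerP 0 y.
  have z_ge0 : 0 <= z by rewrite -(exprn_odd_ge0 _ m_odd) -yz exprn_odd_ge0.
  by rewrite -(ger0_norm y_ge0) -(ger0_norm z_ge0).
have z_lt0 : z < 0 by rewrite -(exprn_odd_lt0 _ m_odd) -yz exprn_odd_lt0.
by rewrite -[y]opprK -[z]opprK -(ltr0_norm y_lt0) -(ltr0_norm z_lt0) yz_norm.
Qed.

Lemma eqrXn_parity_norm (R : realDomainType) k (y z : R) :
  (0 < k)%N -> y ^+ k = z ^+ k -> parity_norm k y = parity_norm k z.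
Proof.
rewrite /parity_norm => k_gt0 yz; case: ifP => [k_odd|_].
  exact: eqrXn_odd k_odd yz.
exact: eqrXn_norm k_gt0 yz.
Qed.

Lemma set_seq_uniq_card (T : finType) (A : {set T}) (s : seq T) :
  all (mem A) s -> uniq s -> size s = #|A| -> [set u in s] = A.
Proof.
move=> s_sub s_uniq s_size; apply/eqP; rewrite eqEcard; apply/andP; split.
  by apply/subsetP => u; rewrite inE => /(allP s_sub).
by rewrite cardsE (card_uniqP s_uniq) s_size.
Qed.

Section LaplacianProducts.
Variables (R : realType) (n k : nat) (E : {set {set 'I_n}}) (x : 'I_n -> R).

Lemma tmul_lap i : tmul k (lap_tensor R k E) x i =
  tmul k (deg_tensor R k E) x i - tmul k (adj_tensor R k E) x i.
Proof. by rewrite /tmul -sumrB; apply: eq_bigr => t _; rewrite mulrBl. Qed.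

Lemma tmul_deg i : (0 < k)%N ->
  tmul k (deg_tensor R k E) x i = (hdeg E i)%:R * x i ^+ k.-1.
Proof.
move=> k_gt0; rewrite /tmul (bigD1 (nseq_tuple k.-1 i)) //= [X in _ + X]big1 ?addr0.
  by rewrite size_nseq prednK // all_nseq !eqxx orbT big_nseq iter_mulr_1.
move=> t t_neq; rewrite size_tuple prednK // !eqxx /=.
case: ifP => [/all_pred1P t_nseq|_]; last by rewrite mul0r.
suff t_eq : t = nseq_tuple k.-1 i by rewrite t_eq eqxx in t_neq.
by apply: val_inj; rewrite /= t_nseq size_tuple.
Qed.

Section Pendant.
Variables (i : 'I_n) (e : {set 'I_n}).
Hypotheses (k_gt0 : (0 < k)%N) (e_in_E : e \in E) (i_in_e : i \in e)
  (card_e : #|e| = k) (pendant : forall f, f \in E -> i \in f -> f = e).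

Lemma hdeg_pendant : hdeg E i = 1%N.
Proof.
rewrite /hdeg (_ : [set f in E | i \in f] = [set e]) ?cards1 //.
apply/setP => f; rewrite !inE; apply/andP/eqP => [[]|->] //.
exact: pendant.
Qed.

Lemma card_setD1_pendant : #|e :\ i| = k.-1.
Proof. by rewrite -card_e (cardsD1 i e) i_in_e. Qed.

Lemma adj_pendant (t : k.-1.-tuple 'I_n) :
  adj_tensor R k E (i :: t) =
  if all (mem (e :\ i)) t && uniq t then ((k.-1)`!%:R)^-1 else 0.
Proof.
rewrite /adj_tensor /= size_tuple prednK // eqxx /=; congr (if _ then _ else _).
apply/andP/andP => [[/andP[i_notin_t t_uniq] t_edge]|[t_sub t_uniq]].
  split=> //; apply/allP => u u_in_t; rewrite !inE; apply/andP; split.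
    by apply: contraNneq i_notin_t => <-.
  by rewrite -(pendant t_edge) ?inE ?in_cons ?u_in_t ?orbT ?eqxx.
have i_notin_t : i \notin tval t.
  by apply/negP => /(allP t_sub); rewrite !inE eqxx.
rewrite i_notin_t t_uniq (set_seq_uniq_card (A := e)) //=.
- by rewrite i_in_e; apply/allP => u /(allP t_sub); rewrite !inE => /andP[].
- by rewrite i_notin_t.
- by rewrite size_tuple prednK.
Qed.

Lemma tmul_adj_pendant :
  tmul k (adj_tensor R k E) x i = \prod_(s in e :\ i) x s.
Proof.
have card_tuples : #|[pred t : k.-1.-tuple 'I_n | all (mem (e :\ i)) t && uniq t]|
    = (k.-1)`!.
  rewrite -ffactnn -[X in X ^_ _]card_setD1_pendant -card_uniq_tuples.
  by apply: eq_card => t; rewrite !inE.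
rewrite /tmul (eq_bigr (fun t : k.-1.-tuple 'I_n =>
    if all (mem (e :\ i)) t && uniq t
    then ((k.-1)`!%:R)^-1 * \prod_(s in e :\ i) x s else 0)).
  rewrite -big_mkcond sumr_const card_tuples -mulrnAl -mulr_natr mulVf ?mul1r //.
  by rewrite pnatr_eq0 -lt0n fact_gt0.
move=> t _; rewrite adj_pendant.
case: ifP => [/andP[t_sub t_uniq]|_]; last by rewrite mul0r.
congr (_ * _); rewrite big_uniq //; apply: eq_bigl => u.
by rewrite -(set_seq_uniq_card t_sub) ?inE // card_setD1_pendant size_tuple.
Qed.

Lemma pendant_eigen lam : tmul k (lap_tensor R k E) x i = lam * x i ^+ k.-1 ->
  (1 - lam) * x i ^+ k.-1 = \prod_(s in e :\ i) x s.
Proof.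
rewrite tmul_lap tmul_deg // hdeg_pendant mul1r tmul_adj_pendant => eig.
by rewrite mulrBl mul1r -eig subKr.
Qed.

End Pendant.
End LaplacianProducts.

Section Hyperstar.
Variables (n k d : nat) (E : {set {set 'I_n}}) (h : 'I_n) (B : 'I_d -> {set 'I_n}).
Hypotheses (k_gt0 : (0 < k)%N) (card_B : forall a, #|B a| = k.-1)
  (heart_notin_B : forall a, h \notin B a)
  (disjoint_B : forall a b, a != b -> [disjoint B a & B b])
  (E_def : E = [set h |: B a | a : 'I_d]).

Lemma hyperstar_edgeE i a e : i \in B a -> e \in E -> i \in e -> e = h |: B a.
Proof.
move=> i_in_Ba; rewrite E_def => /imsetP[b _ ->].
rewrite in_setU1 => /orP[/eqP i_eq_h|i_in_Bb].
  by move: (heart_notin_B a); rewrite -i_eq_h i_in_Ba.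
suff -> : b = a by [].
by apply/eqP; apply: contraTT i_in_Ba => /disjoint_B /disjointFr/(_ i_in_Bb) ->.
Qed.

Lemma hyperstar_leaf_eigen (R : realType) (lam : R) x i a : i \in B a ->
  tmul k (lap_tensor R k E) x i = lam * x i ^+ k.-1 ->
  (1 - lam) * x i ^+ k.-1 = \prod_(s in (h |: B a) :\ i) x s.
Proof.
move=> i_in_Ba; apply: pendant_eigen => //.
- by rewrite E_def; apply/imsetP; exists a.
- by rewrite in_setU1 i_in_Ba orbT.
- by rewrite cardsU1 heart_notin_B card_B add1n prednK.
- by move=> f f_in_E i_in_f; apply: hyperstar_edgeE i_in_Ba f_in_E i_in_f.
Qed.

Section Eigenpair.
Variables (R : realType) (lam : R) (x : 'I_n -> R).
Hypotheses (lam_neq1 : lam != 1)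
  (eig : forall i, tmul k (lap_tensor R k E) x i = lam * x i ^+ k.-1).

Lemma hyperstar_leaf_edge_prod i a : i \in B a ->
  (1 - lam) * x i ^+ k = \prod_(s in h |: B a) x s.
Proof.
move=> i_in_Ba; rewrite (big_setD1 i) ?in_setU1 ?i_in_Ba ?orbT //=.
by rewrite -(hyperstar_leaf_eigen i_in_Ba (eig i)) -(prednK k_gt0) exprS mulrCA.
Qed.

Lemma parity_norm_block i j a : i \in B a -> j \in B a ->
  parity_norm k (x i) = parity_norm k (x j).
Proof.
move=> i_in_Ba j_in_Ba; apply: eqrXn_parity_norm k_gt0 _.
apply: (@mulfI _ (1 - lam)); first by rewrite subr_eq0 eq_sym.
by rewrite (hyperstar_leaf_edge_prod i_in_Ba) (hyperstar_leaf_edge_prod j_in_Ba).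
Qed.

Lemma parity_norm_heart i a : i \in B a -> x i != 0 ->
  parity_norm k (1 - lam) * parity_norm k (x i) = parity_norm k (x h).
Proof.
move=> i_in_Ba xi_neq0; have := hyperstar_leaf_edge_prod i_in_Ba.
rewrite big_setU1 ?heart_notin_B //= (big_setD1 i) //= => /(congr1 (parity_norm k)).
rewrite !parity_normM parity_normX parity_norm_prod.
rewrite (eq_bigr (fun=> parity_norm k (x i))); last first.
  by move=> s; rewrite !inE => /andP[_ s_in_Ba]; exact: parity_norm_block s_in_Ba i_in_Ba.
set m := #|B a :\ i|; set p := parity_norm k (x i); rewrite prodr_const => eq_heart.
have k_eq : k = m.+2 by rewrite -(prednK k_gt0) -(card_B a) (cardsD1 i) i_in_Ba.
apply: (mulIf (_ : p ^+ m.+1 != 0)); first by rewrite expf_neq0 // parity_norm_eq0.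
by rewrite -mulrA -exprS -k_eq eq_heart exprS.
Qed.

End Eigenpair.
End Hyperstar.

Theorem lemma5p1 (R : realType) (n k d : nat) (E : {set {set 'I_n.+1}})
  (lam : R) (x : 'I_n.+1 -> R) :
  (3 <= k)%N -> (2 <= d)%N ->
  is_hyperstar k d E ord0 ->
  H_eigenpair k (lap_tensor R k E) lam x ->
  lam != 1 ->
  (forall i j : 'I_n.+1, i != ord0 -> j != ord0 ->
     (exists2 e, e \in E & (i \in e) && (j \in e)) ->
     (odd k -> x i = x j) /\ (~~ odd k -> `|x i| = `|x j|)) /\
  (forall i j : 'I_n.+1, i != ord0 -> j != ord0 ->
     x i != 0 -> x j != 0 ->
     (odd k -> x i = x j) /\ (~~ odd k -> `|x i| = `|x j|)).
Proof.
move=> k_ge3 _ [B [card_B heart_notin_B disjoint_B cover_B E_def]] [_ eig] lam_neq1.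
have k_gt0 : (0 < k)%N by apply: leq_trans k_ge3.
have block := parity_norm_block k_gt0 card_B heart_notin_B disjoint_B E_def lam_neq1 eig.
have heart := parity_norm_heart k_gt0 card_B heart_notin_B disjoint_B E_def lam_neq1 eig.
split=> i j i_neq0 j_neq0.
  case=> e e_in_E /andP[i_in_e j_in_e]; have [a i_in_Ba] := cover_B i i_neq0.
  have e_eq := hyperstar_edgeE heart_notin_B disjoint_B E_def i_in_Ba e_in_E i_in_e.
  apply/parity_normP/(block i j a i_in_Ba).
  by move: j_in_e; rewrite e_eq in_setU1 (negbTE j_neq0).
move=> xi_neq0 xj_neq0; apply/parity_normP.
have [a i_in_Ba] := cover_B i i_neq0; have [b j_in_Bb] := cover_B j j_neq0.
apply: (@mulfI _ (parity_norm k (1 - lam))).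
  by rewrite parity_norm_eq0 subr_eq0 eq_sym.
by rewrite (heart i a) // (heart j b).
Qed.
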